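(* Let $p$ be a prime, $q$ a power of $p$, $F$ a field of characteristic $p$ containing $\mathbb{F}_q$, and $s>1$ an integer such that $\mathbb{F}_{q^s}$ is not contained in $F$. Let $L(x)=a_0x+a_1x^{q^s}+\cdots+a_mx^{q^{ms}}\in F[x]$ with $m\geq1$, $a_m\neq0$, and with no repeated roots in its splitting field $E$ over $F$; put $n=ms$ and let $v_1,\dots,v_n$ be an ordered $\mathbb{F}_q$-basis of the space of roots of $L$. Then the map $\epsilon_s:H_{n,s}(\mathbb{F}_q)\to E$, $\epsilon_s(P)=P(v_1,\dots,v_n)$, is not injective.
   Context: $H_{n,s}(\mathbb{F}_q)$ is the space of homogeneous polynomials of degree $s$ in $\mathbb{F}_q[x_1,\dots,x_n]$ together with $0$. Such an $L$ is called a $q^s$-polynomial; its roots form an $\mathbb{F}_q$-space of dimension $ms$. *)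

From HB Require Import structures.
From mathcomp Require Import all_boot all_order all_algebra all_field.
From mathcomp Require Import mpoly.
Set Implicit Arguments. Unset Strict Implicit. Unset Printing Implicit Defensive.
Import GRing.Theory.
Local Open Scope ring_scope.

Definition contains_finite_field (F : fieldType) (k : nat) : Prop :=
  exists (K : finFieldType) (f : {rmorphism K -> F}), #|K| = k.

Definition qs_poly (F : fieldType) (q s m : nat) (a : nat -> F) : {poly F} :=
  \sum_(i < m.+1) a i *: 'X^(q ^ (i * s)).

Definition is_Fq_basis_of_roots (Fq : finFieldType) (E : fieldType)
  (emb : Fq -> E) (Lpoly : {poly E}) (N : nat) (v : 'I_N -> E) : Prop :=
  [/\ forall i, root Lpoly (v i),
      forall c : 'I_N -> Fq, \sum_(i < N) emb (c i) * v i = 0 -> forall i, c i = 0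
    & forall x, root Lpoly x -> exists c : 'I_N -> Fq, x = \sum_(i < N) emb (c i) * v i].

Definition eps_eval (Fq : finFieldType) (E : fieldType) (emb : Fq -> E)
  (N : nat) (v : 'I_N -> E) (P : {mpoly Fq[N]}) : E :=
  mmap emb v P.

(* Pick a nonzero root w of L.  As L(wX) is again a q^s-polynomial whose
   coefficients sum to L(w) = 0, it is divisible by X^(q^s) - X; since L has
   distinct roots, so does L(wX), hence X^(q^s) - X has q^s distinct roots in E
   and one of them, al, is not in F_q.  Multiplication by al preserves the root
   space of L, so al v_0 = sum c_i v_i with some c_j <> 0, j <> 0, and
   al v_1 = sum d_i v_i.  The distinct forms (sum d_i x_i) x_0^(s-1) and
   (sum c_i x_i) x_0^(s-2) x_1 of degree s both evaluate to al v_1 v_0^(s-1). *)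

From mathcomp Require Import all_boot all_order all_algebra all_field.
From mathcomp Require Import mpoly ring.
Set Implicit Arguments. Unset Strict Implicit. Unset Printing Implicit Defensive.
Import GRing.Theory.
Local Open Scope ring_scope.

Definition linearized_poly (R : nzRingType) (Q m : nat) (b : nat -> R) :
  {poly R} :=
  \sum_(i < m.+1) b i *: 'X^(Q ^ i).

Lemma qs_polyE (F : fieldType) (q s m : nat) (a : nat -> F) :
  qs_poly q s m a = linearized_poly (q ^ s) m a.
Proof. by apply: eq_bigr => i _; rewrite mulnC expnM. Qed.

Section Linearized.
Variables (R : comNzRingType) (Q m : nat) (b : nat -> R).
Local Notation L := (linearized_poly Q m b).

Lemma map_linearized_poly (S : comNzRingType) (f : {rmorphism R -> S}) :
  map_poly f L = linearized_poly Q m (f \o b).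
Proof.
by rewrite raddf_sum; apply: eq_bigr => i _ /=; rewrite map_polyZ map_polyXn.
Qed.

Lemma horner_linearized_poly x : L.[x] = \sum_(i < m.+1) b i * x ^+ (Q ^ i).
Proof.
by rewrite horner_sum; apply: eq_bigr => i _; rewrite hornerZ hornerXn.
Qed.

Lemma expr_expn_fixed (x : R) i : x ^+ Q = x -> x ^+ (Q ^ i) = x.
Proof.
move=> xQ; elim: i => [|i IH]; first by rewrite expr1.
by rewrite expnSr exprM IH.
Qed.

Lemma root_linearized_poly_scale al x :
  al ^+ Q = al -> root L x -> root L (al * x).
Proof.
rewrite /root !horner_linearized_poly => alQ /eqP Lx.
under eq_bigr => i _ do rewrite exprMn expr_expn_fixed // mulrCA.
by rewrite -mulr_sumr Lx mulr0.
Qed.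

Lemma comp_linearized_poly_scale w :
  L \Po (w *: 'X) = linearized_poly Q m (fun i => b i * w ^+ (Q ^ i)).
Proof.
rewrite raddf_sum; apply: eq_bigr => i _ /=.
by rewrite comp_polyZ comp_Xn_poly exprZn scalerA.
Qed.

Lemma linearized_poly_neq0 : (1 < Q)%N -> b m != 0 -> L != 0.
Proof.
move=> Q1 bm; apply: contraNneq bm => /(congr1 (coefp (Q ^ m))) /=.
rewrite coef0 coef_sum (bigD1 ord_max) //= big1 ?addr0 => [|i /negbTE im].
  by rewrite coefZ coefXn eqxx mulr1 => ->.
rewrite coefZ coefXn eqn_exp2l // (_ : (m == i) = false) ?mulr0 //.
by apply: contraFF im => /eqP mi; apply/eqP/val_inj.
Qed.

End Linearized.

Lemma dvdp_Xn_subX_expn (R : idomainType) (Q i : nat) :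
  ('X^Q - 'X : {poly R}) %| 'X^(Q ^ i) - 'X.
Proof.
elim: i => [|i IH]; first by rewrite expn0 subrr dvdp0.
have -> : 'X^(Q ^ i.+1) - 'X
          = ('X^(Q ^ i) ^+ Q - 'X ^+ Q) + ('X^Q - 'X : {poly R}).
  by rewrite -exprM -expnSr addrA subrK.
by rewrite subrXX dvdp_add // dvdp_mulr.
Qed.

Lemma dvdp_Xn_subX_linearized (R : idomainType) (Q m : nat) (b : nat -> R) :
  \sum_(i < m.+1) b i = 0 -> ('X^Q - 'X) %| linearized_poly Q m b.
Proof.
move=> sum_b0.
have -> : linearized_poly Q m b = \sum_(i < m.+1) b i *: ('X^(Q ^ i) - 'X).
  under [RHS]eq_bigr => i _ do rewrite scalerBr.
  by rewrite sumrB -scaler_suml sum_b0 scale0r subr0.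
apply: (big_ind (fun p => _ %| p)) => [|p1 p2|i _];
  [exact: dvdp0 | exact: dvdp_add |].
by rewrite -mul_polyC dvdp_mull ?dvdp_Xn_subX_expn.
Qed.

Lemma comp_prod_XsubC_scale (R : fieldType) (rs : seq R) (w : R) : w != 0 ->
  (\prod_(r <- rs) ('X - r%:P)) \Po (w *: 'X)
    = w ^+ size rs *: \prod_(r <- rs) ('X - (r / w)%:P).
Proof.
move=> w0; elim: rs => [|r rs IH]; first by rewrite !big_nil comp_polyC scale1r.
rewrite !big_cons comp_polyM IH comp_polyB comp_polyX comp_polyC.
have -> : w *: 'X - r%:P = w *: ('X - (r / w)%:P) :> {poly R}.
  by rewrite scalerBr scale_polyC mulrC divfK.
by rewrite -scalerAl -scalerAr scalerA exprS.
Qed.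

Lemma dvdp_prod_XsubC_uniq_roots (R : idomainType) (D : {poly R}) (rs : seq R) :
  D %| \prod_(r <- rs) ('X - r%:P) -> uniq rs ->
  exists ts, [/\ uniq ts, size ts = (size D).-1 & forall t, t \in ts -> root D t].
Proof.
move=> /(@dvdp_prod_XsubC _ _ rs id) [msk Deq] urs; exists (mask msk rs); split.
- exact: mask_uniq.
- by rewrite (eqp_size Deq) size_prod_XsubC.
- by move=> t t_in; rewrite (eqp_root Deq) root_prod_XsubC.
Qed.

Lemma exists_outside_image (T : eqType) (K : finType) (f : K -> T) (ts : seq T) :
  uniq ts -> (#|K| < size ts)%N -> exists2 t, t \in ts & forall x, f x != t.
Proof.
move=> uts; rewrite ltnNge -(size_codom f) => /negP ts_big.
have [/allP ts_sub | /allPn [t t_in t_notin]] := boolP (all (mem (codom f)) ts).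
  by case: ts_big; apply: uniq_leq_size.
by exists t => // x; apply: contraNneq t_notin => <-; apply: codom_f.
Qed.

Lemma size_Xn_subX (R : nzRingType) (Q : nat) : (1 < Q)%N ->
  size ('X^Q - 'X : {poly R}) = Q.+1.
Proof.
by move=> Q1; rewrite size_polyDl size_polyXn // size_polyN size_polyX ltnS.
Qed.

Lemma uniq_roots_Xn_subX (E : fieldType) (Q m : nat) (b : nat -> E) (c w : E)
    (rs : seq E) :
  (1 < Q)%N -> c != 0 -> uniq rs ->
  linearized_poly Q m b = c *: \prod_(r <- rs) ('X - r%:P) ->
  w != 0 -> root (linearized_poly Q m b) w ->
  exists ts : seq E, [/\ uniq ts, size ts = Q & forall t, t \in ts -> t ^+ Q = t].
Proof.
move=> Q1 c0 urs Lfac w0 Lw.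
have : ('X^Q - 'X) %| linearized_poly Q m b \Po (w *: 'X).
  rewrite comp_linearized_poly_scale dvdp_Xn_subX_linearized //.
  by rewrite -horner_linearized_poly; apply/eqP.
rewrite Lfac comp_polyZ comp_prod_XsubC_scale // scalerA.
rewrite dvdpZr ?mulf_neq0 ?expf_neq0 //.
have -> : \prod_(r <- rs) ('X - (r / w)%:P)
          = \prod_(t <- [seq r / w | r <- rs]) ('X - t%:P) by rewrite big_map.
have uts : uniq [seq r / w | r <- rs].
  by rewrite map_inj_uniq // => r r'; apply: mulIf; rewrite invr_eq0.
move=> /dvdp_prod_XsubC_uniq_roots /(_ uts) [ts [uts' szts tsD]].
exists ts; split=> // [|t /tsD]; first by rewrite szts size_Xn_subX.
by rewrite rootE !hornerE subr_eq0 => /eqP.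
Qed.

Section LinearForms.
Variables (n : nat) (K : nzRingType).
Implicit Types (c : 'I_n -> K) (p : {mpoly K[n]}).

Lemma dhomogXi i : ('X_i : {mpoly K[n]}) \is 1.-homog.
Proof. by rewrite dhomogX /= mdeg1. Qed.

Lemma dhomog_linear_form c : \sum_i c i *: 'X_i \is 1.-homog.
Proof. by apply: rpred_sum => i _; apply/rpredZ/dhomogXi. Qed.

Lemma mcoeff_linear_form c j : (\sum_i c i *: 'X_i)@_U_(j) = c j.
Proof.
rewrite raddf_sum (bigD1 j) //= mcoeffZ mcoeffXU eqxx mulr1 big1 ?addr0 //.
by move=> i /negbTE ij; rewrite mcoeffZ mcoeffXU ij mulr0.
Qed.

Lemma mmap_linear_form (E : comNzRingType) (f : {rmorphism K -> E})
    (v : 'I_n -> E) c :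
  mmap f v (\sum_i c i *: 'X_i) = \sum_i f (c i) * v i.
Proof.
by rewrite raddf_sum; apply: eq_bigr => i _ /=; rewrite mmapZ mmapX mmap1U.
Qed.

Lemma mcoeffMX_eq0 p mu nu : ~~ (mu <= nu)%MM -> (p * 'X_[mu])@_nu = 0.
Proof.
move=> mu_nu; apply: memN_msupp_eq0; rewrite (perm_mem (msuppMX p mu)).
by apply: contra mu_nu => /mapP [nu' _ ->]; rewrite lem_addr.
Qed.

End LinearForms.

Lemma mmap_homog_collision (n s : nat) (K : nzRingType) (E : comNzRingType)
    (f : {rmorphism K -> E}) (v : 'I_n -> E) (i0 i1 j : 'I_n) (al : E)
    (c d : 'I_n -> K) :
  (1 < s)%N -> i1 != i0 -> j != i0 -> c j != 0 ->
  al * v i0 = \sum_i f (c i) * v i -> al * v i1 = \sum_i f (d i) * v i ->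
  exists P1 P2 : {mpoly K[n]},
    [/\ P1 \is s.-homog, P2 \is s.-homog, P1 != P2
      & mmap f v P1 = mmap f v P2].
Proof.
case: s => [|[|k]] // _ i10 j0 cj hc hd.
exists ((\sum_i d i *: 'X_i) * 'X_i0 ^+ k.+1).
exists ((\sum_i c i *: 'X_i) * ('X_i0 ^+ k * 'X_i1)).
split.
- have := dhomogM (dhomog_linear_form d) (dhomogMn k.+1 (dhomogXi K i0)).
  by rewrite mul1n add1n.
- have := dhomogM (dhomog_linear_form c)
    (dhomogM (dhomogMn k (dhomogXi K i0)) (dhomogXi K i1)).
  by rewrite mul1n add1n addn1.
- apply: contra cj; rewrite !mpolyXn -mpolyXD.
  move=> /eqP /(congr1 (mcoeff (U_(i0) *+ k + U_(i1) + U_(j))%MM)).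
  rewrite mcoeffMX mcoeff_linear_form mcoeffMX_eq0 => [<- //|].
  apply/mnm_lepP => /(_ i0); rewrite !mnmDE !mulmnE !mnm1E eqxx.
  by rewrite (negbTE i10) (negbTE j0) /= !addn0 !mul1n ltnn.
- rewrite !rmorphM !rmorphXn /= !mmap_linear_form -hc -hd !mmapX !mmap1U exprS.
  ring.
Qed.

Lemma exists_coord_off_neq0 (K : nzRingType) (E : idomainType)
    (f : {rmorphism K -> E}) (n : nat) (v : 'I_n -> E) (i0 : 'I_n) (al : E)
    (c : 'I_n -> K) :
  (forall x, f x != al) -> v i0 != 0 -> al * v i0 = \sum_i f (c i) * v i ->
  exists2 j, j != i0 & c j != 0.
Proof.
move=> al_notin v0 hc.
have [j /andP [ji0 cj] | c_off0] := pickP (fun j => (j != i0) && (c j != 0)).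
  by exists j.
suff al_eq : f (c i0) = al by case/eqP: (al_notin (c i0)).
apply: (mulIf v0); rewrite hc (bigD1 i0) //= big1 ?addr0 // => i ii0.
by move: (c_off0 i); rewrite /= ii0 => /negbFE/eqP ->; rewrite rmorph0 mul0r.
Qed.

Lemma free_vec_neq0 (K : nzRingType) (E : comNzRingType)
    (f : {rmorphism K -> E}) (n : nat) (v : 'I_n -> E) :
  (forall c : 'I_n -> K, \sum_i f (c i) * v i = 0 -> forall i, c i = 0) ->
  forall i, v i != 0.
Proof.
move=> free i; apply/eqP => vi0.
suff : ((i == i)%:R : K) = 0 by rewrite eqxx; apply/eqP/oner_neq0.
apply: (free (fun j => (j == i)%:R)).
rewrite (bigD1 i) //= big1 ?addr0 => [|j /negbTE ->]; last by rewrite rmorph0 mul0r.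
by rewrite eqxx vi0 mulr0.
Qed.

Theorem theorem7p6
  (p q s m : nat) (F : fieldType) (Fq : finFieldType) (iota : {rmorphism Fq -> F})
  (a : nat -> F) (E : fieldExtType F) (v : 'I_(m * s) -> E) :
  prime p -> p \in [pchar F] -> (exists k, q = p ^ k.+1)%N ->
  #|Fq| = q ->
  (1 < s)%N ->
  ~ contains_finite_field F (q ^ s) ->
  (1 <= m)%N -> a m != 0 ->
  splittingFieldFor 1%VS (map_poly (in_alg E) (qs_poly q s m a)) fullv ->
  (exists2 rs : seq E,
      map_poly (in_alg E) (qs_poly q s m a)
        = (in_alg E (lead_coef (qs_poly q s m a))) *: \prod_(r <- rs) ('X - r%:P)
    & uniq rs) ->
  is_Fq_basis_of_roots (fun c => in_alg E (iota c))
    (map_poly (in_alg E) (qs_poly q s m a)) v ->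
  ~ injective (fun P : {P : {mpoly Fq[m * s]} | P \is s.-homog} =>
                 eps_eval (fun c => in_alg E (iota c)) v (val P)).
Proof.
move=> _ _ _ cardF s1 _ m1 am _ [rs Lfac urs] [vroot vfree vspan] inj.
pose f : {rmorphism Fq -> E} := (in_alg E \o iota)%function.
have q1 : (1 < q)%N.
  by rewrite -cardF; apply/card_gt1P; exists 0, 1; rewrite eq_sym oner_neq0.
have qQ : (q < q ^ s)%N by rewrite -{1}(expn1 q) ltn_exp2l.
have n1 : (1 < m * s)%N by rewrite (leq_trans s1) // leq_pmull.
pose i0 : 'I_(m * s) := Ordinal (ltnW n1).
pose i1 : 'I_(m * s) := Ordinal n1.
have L0 : in_alg E (lead_coef (qs_poly q s m a)) != 0.
  by rewrite fmorph_eq0 lead_coef_eq0 qs_polyE linearized_poly_neq0 //;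
    apply: ltn_trans qQ.
rewrite qs_polyE map_linearized_poly in Lfac vroot vspan L0.
have v0 : v i0 != 0 := free_vec_neq0 (f := f) vfree i0.
have [ts [uts szts tsQ]] :=
  uniq_roots_Xn_subX (ltn_trans q1 qQ) L0 urs Lfac v0 (vroot i0).
have [al /tsQ alQ al_notin] : exists2 al, al \in ts & forall x, f x != al.
  by apply: exists_outside_image; rewrite ?cardF ?szts.
have [c hc] := vspan _ (root_linearized_poly_scale alQ (vroot i0)).
have [d hd] := vspan _ (root_linearized_poly_scale alQ (vroot i1)).
have [j ji0 cj] := exists_coord_off_neq0 al_notin v0 hc.
have [P1 [P2 [hP1 hP2 /eqP P12 eval12]]] :=
  mmap_homog_collision (f := f) s1 (isT : i1 != i0) ji0 cj hc hd.
by apply: P12; have /(_ eval12) [] := inj (exist _ P1 hP1) (exist _ P2 hP2).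
Qed.
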